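(* Let $p\ge 1$, let $F:\mathbb{R}^p\to\mathbb{R}^p$ and $G(\boldsymbol{x}) := F(\boldsymbol{x})-\boldsymbol{x}$, and let $\boldsymbol{x}^\ast\in\mathbb{R}^p$. Assume (A1): $G$ is differentiable in an open convex set $D$ containing $\boldsymbol{x}^\ast$, $G(\boldsymbol{x}^\ast)=0$, $dG(\boldsymbol{x}^\ast)$ is non-singular, and for some constants $d>0$ and $K$, $\|dG(\boldsymbol{x})-dG(\boldsymbol{x}^\ast)\|\le K\|\boldsymbol{x}-\boldsymbol{x}^\ast\|^d$ for all $\boldsymbol{x}\in D$. Suppose there exist a constant $\mu_2\ge 0$, a non-singular symmetric matrix $M\in\mathbb{R}^{p\times p}$, and a neighborhood $N'$ of $(\boldsymbol{x}^\ast,dG(\boldsymbol{x}^\ast)^{-1})$ such that for all $(\boldsymbol{x},H)\in N'$, with $\boldsymbol{v}=G(F(\boldsymbol{x}))-G(\boldsymbol{x})\neq 0$, $$\frac{\|M\boldsymbol{v}-M^{-1}\boldsymbol{v}\|}{\|M^{-1}\boldsymbol{v}\|}\le\mu_2\|\boldsymbol{v}\|^d.$$ Then the updates $\bar{\boldsymbol{x}}=\boldsymbol{x}-HG(\boldsymbol{x})$ and $\bar H=H-H\frac{\boldsymbol{v}\boldsymbol{v}^T}{\boldsymbol{v}^T\boldsymbol{v}}+\frac{\boldsymbol{u}\boldsymbol{v}^T}{\boldsymbol{v}^T\boldsymbol{v}}$ are well-defined in a neighborhood $N$ of $(\boldsymbol{x}^\ast,dG(\boldsymbol{x}^\ast)^{-1})$,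 and the corresponding iteration $\boldsymbol{x}_{k+1}=\boldsymbol{x}_k-H_kG(\boldsymbol{x}_k)$, $H_{k+1}=\bar H$ evaluated at $(\boldsymbol{x}_k,H_k)$, is locally convergent to $\boldsymbol{x}^\ast$: there exist $\epsilon>0$, $\delta>0$ such that whenever $\|\boldsymbol{x}_0-\boldsymbol{x}^\ast\|<\epsilon$ and $\|H_0-dG(\boldsymbol{x}^\ast)^{-1}\|_M<\delta$, the iteration is well-defined and $\boldsymbol{x}_k\to\boldsymbol{x}^\ast$.
   Context: $F$ is a majorization–minimization (MM) algorithm map and $G$ its residual; $dG$ denotes the Jacobian of $G$. $\|\cdot\|$ is a chosen vector norm on $\mathbb{R}^p$ and, for matrices, its induced operator norm; $\|A\|_M:=\|MAM\|_F$ with $\|\cdot\|_F$ the Frobenius norm. For a pair $(\boldsymbol{x},H)$, $\boldsymbol{u}=F(\boldsymbol{x})-\boldsymbol{x}$ and $\boldsymbol{v}=G(F(\boldsymbol{x}))-G(\boldsymbol{x})$. Standing assumption: the MM map is locally convergent to $\boldsymbol{x}^\ast$ in a neighborhood $S$ of $\boldsymbol{x}^\ast$ with linear rate $\tau$, i.e. $\|F(\boldsymbol{x})-\boldsymbol{x}^\ast\|\le\tau\|\boldsymbol{x}-\boldsymbol{x}^\ast\|$ for all $\boldsymbol{x}\in S$, with $\tau\in(0,1)$. *)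

From HB Require Import structures.
From mathcomp Require Import all_boot all_order all_algebra.
From mathcomp Require Import all_classical all_reals all_analysis.
Set Implicit Arguments. Unset Strict Implicit. Unset Printing Implicit Defensive.
Import Order.TTheory GRing.Theory Num.Theory.
Import numFieldNormedType.Exports.
Local Open Scope ring_scope.
Local Open Scope classical_set_scope.

Definition is_vnorm (R : realType) (p : nat) (nv : 'cV[R]_p -> R) : Prop :=
  [/\ forall x, 0 <= nv x,
      forall x, nv x = 0 -> x = 0,
      forall (a : R) x, nv (a *: x) = `|a| * nv x &
      forall x y, nv (x + y) <= nv x + nv y].

Definition opnorm (R : realType) (p : nat) (nv : 'cV[R]_p -> R) (A : 'M[R]_p) : R :=
  sup [set nv (A *m x) | x in [set x : 'cV[R]_p | nv x = 1]].

Definition frob (R : realType) (p : nat) (A : 'M[R]_p) : R :=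
  Num.sqrt (\sum_(i < p) \sum_(j < p) A i j ^+ 2).

Definition Mnorm (R : realType) (p : nat) (M A : 'M[R]_p) : R := frob (M *m A *m M).

Definition resid (R : realType) (p : nat) (F : 'cV[R]_p -> 'cV[R]_p) (x : 'cV[R]_p) :=
  F x - x.

Definition jac (R : realType) (p : nat) (G : 'cV[R]_p -> 'cV[R]_p) (x : 'cV[R]_p)
  : 'M[R]_p := \matrix_(i < p, j < p) ('d G (x : 'cV[R]_p) (delta_mx j 0) : 'cV[R]_p) i 0.

Definition uvec (R : realType) (p : nat) (F : 'cV[R]_p -> 'cV[R]_p) x := F x - x.
Definition vvec (R : realType) (p : nat) (F : 'cV[R]_p -> 'cV[R]_p) x :=
  resid F (F x) - resid F x.

Definition xbar (R : realType) (p : nat) (F : 'cV[R]_p -> 'cV[R]_p) x (H : 'M[R]_p) :=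
  x - H *m resid F x.

Definition Hbar (R : realType) (p : nat) (F : 'cV[R]_p -> 'cV[R]_p) x (H : 'M[R]_p)
  : 'M[R]_p :=
  let u := uvec F x in let v := vvec F x in
  let s := ((v^T *m v) 0 0) in
  H - s^-1 *: (H *m (v *m v^T)) + s^-1 *: (u *m v^T).

Fixpoint iterQN (R : realType) (p : nat) (F : 'cV[R]_p -> 'cV[R]_p)
  (x0 : 'cV[R]_p) (H0 : 'M[R]_p) (k : nat) : 'cV[R]_p * 'M[R]_p :=
  match k with
  | 0 => (x0, H0)
  | k'.+1 => let xH := iterQN F x0 H0 k' in
             (xbar F xH.1 xH.2, Hbar F xH.1 xH.2)
  end.

From HB Require Import structures.
From mathcomp Require Import all_boot all_order all_algebra.
From mathcomp Require Import all_classical all_reals all_analysis.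
From mathcomp Require Import ring lra.
Import Order.TTheory GRing.Theory Num.Theory.
Import numFieldNormedType.Exports.
Local Open Scope ring_scope.
Local Open Scope classical_set_scope.
Set Implicit Arguments. Unset Strict Implicit. Unset Printing Implicit Defensive.

(* Bounded deterioration.  Near [xs] the residual G is nearly linear: by the
   mean value theorem and the Hoelder bound on dG,
   |G y - G x - J (y - x)| <= L r^d |y - x| on the ball of radius r.  With
   Ji = J^-1 the update satisfies
     (Hbar - Ji) y = (H - Ji) (y - P_v y) + (v.y / v.v) (u - Ji v),
   where P_v is the orthogonal projection onto v and |u - Ji v| = O(r^d) |v|,
   so a bound eta on the Euclidean operator norm of H - Ji grows by at most
   C |x - xs|^d per step.  While eta is small the step x -> xbar halves the
   error, hence the growth is a convergent geometric series: the quantity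
   eta + C / (1 - 2^-d) |x - xs|^d never increases, and for small initial
   error and small eta the iteration never leaves this regime.  Linear
   convergence of F gives u <> 0 off xs, and |u| <= 2 |Ji| |v| then gives
   v <> 0. *)

Section VectorNorm.
Variables (R : realType) (p : nat) (nv : 'cV[R]_p -> R).
Hypothesis nvP : is_vnorm nv.

Lemma nv_ge0 x : 0 <= nv x. Proof. by case: nvP. Qed.
Lemma nv_eq0 x : nv x = 0 -> x = 0. Proof. by case: nvP => _ + _ _; apply. Qed.
Lemma nvZ a x : nv (a *: x) = `|a| * nv x. Proof. by case: nvP. Qed.
Lemma nvD x y : nv (x + y) <= nv x + nv y. Proof. by case: nvP. Qed.

Lemma nv0 : nv 0 = 0.
Proof. by rewrite -(scale0r (0 : 'cV[R]_p)) nvZ normr0 mul0r. Qed.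

Lemma nvN x : nv (- x) = nv x.
Proof. by rewrite -scaleN1r nvZ normrN normr1 mul1r. Qed.

Lemma nv_distC x y : nv (x - y) = nv (y - x).
Proof. by rewrite -opprB nvN. Qed.

Lemma nv_gt0 x : x != 0 -> 0 < nv x.
Proof. by move=> x_neq0; rewrite lt_def nv_ge0 andbT; apply: contra x_neq0 => /eqP/nv_eq0->. Qed.

Lemma ler_nv_distD x y z : nv (x - z) <= nv (x - y) + nv (y - z).
Proof. by have := nvD (x - y) (y - z); rewrite addrA subrK. Qed.

Lemma ler_nv_dist x y : `|nv x - nv y| <= nv (x - y).
Proof.
have := ler_nv_distD x y 0; have := ler_nv_distD y x 0.
rewrite !subr0 (nv_distC y) ler_norml => ? ?; apply/andP; split; lra.
Qed.

Lemma nv_sum (I : Type) (r : seq I) (P : pred I) (f : I -> 'cV[R]_p) :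
  nv (\sum_(i <- r | P i) f i) <= \sum_(i <- r | P i) nv (f i).
Proof.
apply: (big_rec2 (fun y1 y2 => nv y1 <= y2)); first by rewrite nv0.
by move=> i y1 y2 _ IH; apply: le_trans (nvD _ _) (lerD (lexx _) IH).
Qed.

End VectorNorm.

Lemma mx_norm_entry_le (R : realDomainType) m n (A : 'M[R]_(m, n)) i j : `|A i j| <= `|A|.
Proof.
rewrite [leRHS]/Num.norm /= mx_normrE; apply/bigmax_geP; right => /=.
by exists (i, j).
Qed.

Lemma mx_norm_le (R : realDomainType) m n (A : 'M[R]_(m, n)) c :
  0 <= c -> (forall i j, `|A i j| <= c) -> `|A| <= c.
Proof.
move=> c_ge0 Ale; rewrite [leLHS]/Num.norm /= mx_normrE.
by apply/bigmax_leP; split => // ij _; apply: Ale.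
Qed.

Lemma mx_norm_tr (R : realDomainType) m n (A : 'M[R]_(m, n)) : `|A^T| = `|A|.
Proof.
apply/le_anti/andP; split; apply: mx_norm_le => // i j; rewrite ?mxE.
  exact: (mx_norm_entry_le A j i).
by have := mx_norm_entry_le A^T j i; rewrite mxE.
Qed.

Lemma klipschitz_continuous (R : numFieldType) (V : normedModType R) (f : V -> R) (c : R) :
  0 < c -> (forall a b, `|f a - f b| <= c * `|a - b|) -> continuous f.
Proof.
move=> c_gt0 f_lip v; apply/cvgrPdist_lt => e e_gt0; near=> w.
apply: le_lt_trans (f_lip _ _) _; rewrite -ltr_pdivlMl //.
by near: w; apply: cvgr_dist_lt => //; rewrite mulr_gt0 // invr_gt0.
Unshelve. all: by end_near.
Qed.

Lemma halving_cvg0 (R : archiFieldType) (a : nat -> R) :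
  (forall k, 0 <= a k) -> (forall k, a k.+1 <= a k / 2) -> a @ \oo --> 0.
Proof.
move=> a_ge0 a_half.
have a_geo k : a k <= a 0%N * (2^-1) ^+ k.
  elim: k => [|k IHk]; first by rewrite expr0 mulr1.
  apply: le_trans (a_half k) _.
  by rewrite exprS mulrCA [leLHS]mulrC ler_wpM2l.
apply: (@squeeze_cvgr _ _ _ _ (fun=> 0) (fun k => a 0%N * (2^-1) ^+ k)).
- by near=> k; rewrite a_ge0 a_geo.
- exact: cvg_cst.
- rewrite -[X in _ --> X](mulr0 (a 0%N)); apply: cvgMl_tmp; apply: cvg_expr.
  by rewrite ger0_norm ?invr_ge0 // invf_lt1 // ltr1n.
Unshelve. all: by end_near.
Qed.

Lemma exists_small_radius (R : realType) (d L g b : R) :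
  0 < d -> 0 <= L -> 0 < g -> 0 < b -> exists2 r, 0 < r & r <= b /\ L * r `^ d <= g.
Proof.
move=> d_gt0 L_ge0 g_gt0 b_gt0; set g' := g / (L + 1).
have g'_gt0 : 0 < g' by rewrite divr_gt0 // ltr_wpDl.
exists (Num.min b (g' `^ d^-1)); first by rewrite lt_min b_gt0 powR_gt0.
split; first by rewrite ge_min lexx.
have r_le : Num.min b (g' `^ d^-1) <= g' `^ d^-1 by rewrite ge_min lexx orbT.
have rd_le : Num.min b (g' `^ d^-1) `^ d <= g'.
  apply: le_trans (ge0_ler_powR (ltW d_gt0) _ _ r_le) _.
  - by rewrite nnegrE le_min (ltW b_gt0) powR_ge0.
  - by rewrite nnegrE powR_ge0.
  by rewrite -powRrM mulVf ?gt_eqF // powRr1 // ltW.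
apply: le_trans (ler_wpM2l L_ge0 rd_le) _.
by rewrite /g' mulrCA ger_pMr // ler_pdivrMr ?ltr_wpDl // mul1r lerDl.
Qed.

Section NormEquivalence.
Variables (R : realType) (p : nat) (nv : 'cV[R]_p -> R).
Hypothesis nvP : is_vnorm nv.

Lemma nv_le_mx_norm : exists2 c, 0 < c & forall x, nv x <= c * `|x|.
Proof.
exists (1 + \sum_i \sum_j nv (delta_mx i j)).
  by rewrite ltr_pwDl // !sumr_ge0 // => i _; rewrite sumr_ge0 // => j _; apply: nv_ge0.
move=> x; rewrite [in leLHS](matrix_sum_delta x).
apply: (@le_trans _ _ ((\sum_i \sum_j nv (delta_mx i j)) * `|x|)); last first.
  by rewrite mulrDl mul1r lerDr.
apply: le_trans (nv_sum nvP _ _ _) _; rewrite mulr_suml; apply: ler_sum => i _.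
apply: le_trans (nv_sum nvP _ _ _) _; rewrite mulr_suml; apply: ler_sum => j _.
by rewrite (nvZ nvP) [leRHS]mulrC ler_wpM2r ?nv_ge0 ?mx_norm_entry_le.
Qed.

Hypothesis p_gt0 : (0 < p)%N.

(* The minimum of [nv] on the compact unit sphere of the sup norm is positive. *)
Lemma mx_norm_le_nv : exists2 c, 0 < c & forall x, `|x| <= c * nv x.
Proof.
have [c2 c2_gt0 nv_le] := nv_le_mx_norm.
pose f (v : 'rV[R]_p) := nv v^T.
pose A := [set v : 'rV[R]_p | `|v| = 1].
have f_cont : continuous f.
  apply: (@klipschitz_continuous _ _ _ c2) => // a b.
  apply: le_trans (ler_nv_dist nvP _ _) _.
  by rewrite -linearB /= -(mx_norm_tr (a - b)); apply: nv_le.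
have A_neq0 : A !=set0.
  pose v0 : 'rV[R]_p := const_mx 1.
  have v0_neq0 : v0 != 0.
    apply/eqP => /matrixP /(_ 0 (Ordinal p_gt0)); rewrite !mxE => /eqP.
    by rewrite oner_eq0.
  exists (`|v0|^-1 *: v0); rewrite /A /= normrZ ger0_norm ?invr_ge0 //.
  by rewrite mulVf // normr_eq0.
have A_closed : closed A.
  apply: (@preimage_closed _ _ (fun v : 'rV[R]_p => `|v|) [set x : R | x = 1]).
    by move=> x _; apply: norm_continuous.
  exact: closed_eq.
have A_bounded : \forall M \near +oo, globally A [set x : 'rV[R]_p | `|x| <= M].
  by near=> M => v /= ->; near: M; apply: nbhs_pinfty_ge.
have [c cA fc_min] := EVT_min_rV A_neq0 (bounded_closed_compact A_bounded A_closed)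
  (continuous_subspaceT f_cont).
have c_norm : `|c| = 1 by move: cA; rewrite inE.
have fc_gt0 : 0 < f c.
  apply: (nv_gt0 nvP); rewrite -[0]trmx0 (inj_eq (@trmx_inj _ _ _)).
  by apply: contraPneq c_norm => ->; rewrite normr0 => /eqP; rewrite eq_sym oner_eq0.
exists (f c)^-1; first by rewrite invr_gt0.
move=> x; have [->|x_neq0] := eqVneq x 0.
  by rewrite normr0 mulr_ge0 ?invr_ge0 ?nv_ge0 // ltW.
have x_gt0 : 0 < `|x| by rewrite normr_gt0.
have x1A : (`|x|^-1 *: x)^T \in A.
  by rewrite inE /A /= mx_norm_tr normrZ ger0_norm ?invr_ge0 // mulVf // gt_eqF.
have := fc_min _ x1A; rewrite /f trmxK (nvZ nvP) ger0_norm ?invr_ge0 //.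
by rewrite ler_pdivlMl // ler_pdivlMl // mulrC.
Unshelve. all: by end_near.
Qed.

End NormEquivalence.

Section Euclidean.
Variables (R : realType) (p : nat).
Implicit Types (x y z u v w : 'cV[R]_p) (A B : 'M[R]_p).

Definition dotv x y : R := (x^T *m y) 0 0.
Definition enorm x : R := Num.sqrt (dotv x x).

Lemma dotvE x y : dotv x y = \sum_i x i 0 * y i 0.
Proof. by rewrite /dotv mxE; apply: eq_bigr => i _; rewrite mxE. Qed.

Lemma dotvC x y : dotv x y = dotv y x.
Proof. by rewrite !dotvE; apply: eq_bigr => i _; rewrite mulrC. Qed.

Lemma dotvDl x y z : dotv (x + y) z = dotv x z + dotv y z.
Proof. by rewrite /dotv linearD mulmxDl mxE. Qed.

Lemma dotvZl a x y : dotv (a *: x) y = a * dotv x y.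
Proof. by rewrite /dotv linearZ -scalemxAl mxE. Qed.

Lemma dotvDr x y z : dotv x (y + z) = dotv x y + dotv x z.
Proof. by rewrite dotvC dotvDl !(dotvC x). Qed.

Lemma dotvZr a x y : dotv x (a *: y) = a * dotv x y.
Proof. by rewrite dotvC dotvZl dotvC. Qed.

Lemma dotv0r x : dotv x 0 = 0.
Proof. by rewrite /dotv mulmx0 mxE. Qed.

Lemma dotv_expand x y t :
  dotv (x + t *: y) (x + t *: y) = dotv x x + 2 * t * dotv x y + t ^+ 2 * dotv y y.
Proof.
by rewrite !dotvDl !dotvDr !dotvZl !dotvZr (dotvC y x); ring.
Qed.

Lemma dotv_ge0 x : 0 <= dotv x x.
Proof. by rewrite dotvE sumr_ge0 // => i _; rewrite -expr2 sqr_ge0. Qed.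

Lemma dotv_eq0 x : dotv x x = 0 -> x = 0.
Proof.
rewrite dotvE => /eqP; rewrite psumr_eq0 => [/allP x0|i _]; last by rewrite -expr2 sqr_ge0.
apply/matrixP => i j; rewrite ord1 mxE.
by have /implyP/(_ isT) := x0 i (mem_index_enum _); rewrite mulf_eq0 orbb => /eqP.
Qed.

Lemma dotv_gt0 x : x != 0 -> 0 < dotv x x.
Proof.
by move=> x_neq0; rewrite lt_def dotv_ge0 andbT; apply: contra x_neq0 => /eqP/dotv_eq0->.
Qed.

Lemma dotv_sqr_le x y : dotv x y ^+ 2 <= dotv x x * dotv y y.
Proof.
have [->|y_neq0] := eqVneq y 0; first by rewrite !dotv0r expr0n mulr0.
have yy_gt0 := dotv_gt0 y_neq0.
have := dotv_ge0 (x + (- (dotv x y / dotv y y)) *: y); rewrite dotv_expand.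
have -> : dotv x x + 2 * - (dotv x y / dotv y y) * dotv x y +
    (- (dotv x y / dotv y y)) ^+ 2 * dotv y y = dotv x x - dotv x y ^+ 2 / dotv y y.
  by field; rewrite gt_eqF.
by rewrite subr_ge0 ler_pdivrMr.
Qed.

Lemma enorm_ge0 x : 0 <= enorm x. Proof. exact: sqrtr_ge0. Qed.

Lemma enorm_gt0 x : x != 0 -> 0 < enorm x.
Proof. by move/dotv_gt0; rewrite sqrtr_gt0. Qed.

Lemma enorm_sqr x : enorm x ^+ 2 = dotv x x.
Proof. by rewrite sqr_sqrtr // dotv_ge0. Qed.

Lemma normr_dotv_le x y : `|dotv x y| <= enorm x * enorm y.
Proof. by rewrite -sqrtr_sqr -sqrtrM ?dotv_ge0 // ler_wsqrtr // dotv_sqr_le. Qed.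

Lemma enormZ a x : enorm (a *: x) = `|a| * enorm x.
Proof.
by rewrite /enorm dotvZl dotvZr mulrA -expr2 sqrtrM ?sqr_ge0 // sqrtr_sqr.
Qed.

Lemma enormN x : enorm (- x) = enorm x.
Proof. by rewrite -scaleN1r enormZ normrN normr1 mul1r. Qed.

Lemma enormD x y : enorm (x + y) <= enorm x + enorm y.
Proof.
have xy_le : dotv x y <= enorm x * enorm y := le_trans (ler_norm _) (normr_dotv_le x y).
rewrite -(ger0_norm (addr_ge0 (enorm_ge0 x) (enorm_ge0 y))) -sqrtr_sqr ler_wsqrtr //.
have := dotv_expand x y 1; rewrite scale1r => ->.
rewrite sqrrD -!enorm_sqr mulr1 expr1n mul1r mulr2n; lra.
Qed.

Lemma normr_entry_le_enorm x i : `|x i 0| <= enorm x.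
Proof.
rewrite -sqrtr_sqr ler_wsqrtr // dotvE (bigD1 i) //= expr2 lerDl.
by rewrite sumr_ge0 // => k _; rewrite -expr2 sqr_ge0.
Qed.

Lemma mx_norm_le_enorm x : `|x| <= enorm x.
Proof. by apply: mx_norm_le (enorm_ge0 x) _ => i j; rewrite ord1 normr_entry_le_enorm. Qed.

Lemma enorm_le_mx_norm x : enorm x <= (1 + p%:R) * `|x|.
Proof.
have xx_le : dotv x x <= p%:R * `|x| ^+ 2.
  rewrite dotvE; apply: (@le_trans _ _ (\sum_(i < p) `|x| ^+ 2)).
    apply: ler_sum => i _; rewrite -expr2 -real_normK ?num_real //.
    by rewrite lerXn2r ?nnegrE ?mx_norm_entry_le.
  by rewrite sumr_const card_ord mulr_natl.
rewrite -(ger0_norm (mulr_ge0 (addr_ge0 ler01 (ler0n _ _)) (normr_ge0 x))) -sqrtr_sqr.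
apply: ler_wsqrtr; apply: le_trans xx_le _; rewrite exprMn ler_wpM2r ?sqr_ge0 //.
have := ler0n R p; nra.
Qed.

Definition en_bounded A (e : R) := forall y, enorm (A *m y) <= e * enorm y.

Lemma en_bounded_le A a b : a <= b -> en_bounded A a -> en_bounded A b.
Proof. by move=> ab Aa y; apply: le_trans (Aa y) _; rewrite ler_wpM2r ?enorm_ge0. Qed.

Lemma en_bounded_mulmx A B a b :
  0 <= a -> en_bounded A a -> en_bounded B b -> en_bounded (A *m B) (a * b).
Proof.
move=> a_ge0 Aa Bb y; rewrite -mulmxA; apply: le_trans (Aa _) _.
by rewrite -mulrA ler_wpM2l.
Qed.

Lemma frob_ge0 A : 0 <= frob A. Proof. exact: sqrtr_ge0. Qed.

Lemma en_bounded_frob A : en_bounded A (frob A).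
Proof.
move=> y; rewrite -(ger0_norm (mulr_ge0 (frob_ge0 A) (enorm_ge0 y))) -sqrtr_sqr.
apply: ler_wsqrtr; rewrite exprMn enorm_sqr /frob sqr_sqrtr; last first.
  by rewrite !sumr_ge0 // => i _; rewrite sumr_ge0 // => j _; rewrite sqr_ge0.
rewrite dotvE mulr_suml; apply: ler_sum => i _; rewrite -expr2.
have -> : (A *m y) i 0 = dotv (row i A)^T y.
  by rewrite dotvE mxE; apply: eq_bigr => j _; rewrite !mxE.
apply: le_trans (dotv_sqr_le _ _) _; rewrite ler_wpM2r ?dotv_ge0 // dotvE.
by rewrite le_eqVlt; apply/orP; left; apply/eqP/eq_bigr => j _; rewrite !mxE expr2.
Qed.

Lemma en_bounded_Mnorm M A :
  M \in unitmx -> en_bounded A (frob (invmx M) ^+ 2 * Mnorm M A).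
Proof.
move=> M_unit; rewrite /Mnorm expr2 mulrAC; set B := M *m A *m M.
have -> : A = invmx M *m B *m invmx M.
  by rewrite /B !mulmxA mulVmx // mul1mx -mulmxA mulmxV // mulmx1.
apply: en_bounded_mulmx (en_bounded_frob _); first by rewrite !mulr_ge0 ?frob_ge0.
by apply: en_bounded_mulmx; [exact: frob_ge0 | exact: en_bounded_frob..].
Qed.

Lemma en_bounded_Mnorm_small M eta0 : M \in unitmx -> 0 < eta0 ->
  exists2 delta, 0 < delta & forall A, Mnorm M A < delta ->
    exists2 eta, 0 <= eta <= eta0 & en_bounded A eta.
Proof.
move=> M_unit eta0_gt0; set m2 := frob (invmx M) ^+ 2.
have m2_ge0 : 0 <= m2 by apply: sqr_ge0.
exists (eta0 / (m2 + 1)) => [|A A_small]; first by rewrite divr_gt0 // ltr_wpDl.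
exists (m2 * Mnorm M A); last exact: en_bounded_Mnorm.
rewrite mulr_ge0 ?frob_ge0 //=; have m2_le : m2 <= m2 + 1 by rewrite lerDl.
apply: le_trans (ler_wpM2r (frob_ge0 _) m2_le) _.
by rewrite mulrC -ler_pdivlMr ?ltr_wpDl // ltW.
Qed.

Lemma mulmx_rank1 u v y : u *m v^T *m y = dotv v y *: u.
Proof. by rewrite -mulmxA (mx11_scalar (v^T *m y)) mul_mx_scalar. Qed.

Lemma enorm_sub_proj_le v y : enorm (y - ((dotv v v)^-1 * dotv v y) *: v) <= enorm y.
Proof.
have [->|v_neq0] := eqVneq v 0; first by rewrite scaler0 subr0.
have vv_gt0 := dotv_gt0 v_neq0.
rewrite ler_wsqrtr // -scaleNr dotv_expand (dotvC y v).
have -> : dotv y y + 2 * - ((dotv v v)^-1 * dotv v y) * dotv v y +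
    (- ((dotv v v)^-1 * dotv v y)) ^+ 2 * dotv v v = dotv y y - dotv v y ^+ 2 / dotv v v.
  by field; rewrite gt_eqF.
by rewrite lerBlDr lerDl divr_ge0 ?sqr_ge0 ?dotv_ge0.
Qed.

Lemma enorm_rank1_le v w y : v != 0 ->
  enorm (((dotv v v)^-1 * dotv v y) *: w) <= enorm w / enorm v * enorm y.
Proof.
move=> v_neq0; have v_gt0 := enorm_gt0 v_neq0.
rewrite enormZ normrM ger0_norm ?invr_ge0 ?dotv_ge0 // -enorm_sqr.
apply: le_trans (ler_wpM2r (enorm_ge0 w) (ler_wpM2l _ (normr_dotv_le v y))) _.
  by rewrite invr_ge0 sqr_ge0.
by rewrite le_eqVlt; apply/orP; left; apply/eqP; field; rewrite gt_eqF.
Qed.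

Lemma rank1_update_subE (H Ji : 'M[R]_p) u v y :
  let c := (dotv v v)^-1 * dotv v y in
  (H - (dotv v v)^-1 *: (H *m (v *m v^T)) + (dotv v v)^-1 *: (u *m v^T) - Ji) *m y =
  (H - Ji) *m (y - c *: v) + c *: (u - Ji *m v).
Proof.
rewrite /= !mulmxDl !mulNmx -!scalemxAl -(mulmxA H) !mulmx_rank1 -scalemxAr.
rewrite !mulmxDr !mulmxN -!scalemxAr.
by apply/matrixP => i j; rewrite !mxE; ring.
Qed.

Lemma en_bounded_rank1_update (H Ji : 'M[R]_p) u v eta b :
  0 <= eta -> en_bounded (H - Ji) eta -> v != 0 -> enorm (u - Ji *m v) <= b * enorm v ->
  en_bounded (H - (dotv v v)^-1 *: (H *m (v *m v^T)) + (dotv v v)^-1 *: (u *m v^T) - Ji)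
    (eta + b).
Proof.
move=> eta_ge0 H_bd v_neq0 uv_le y; have v_gt0 := enorm_gt0 v_neq0.
rewrite rank1_update_subE mulrDl; apply: le_trans (enormD _ _) (lerD _ _).
  by apply: le_trans (H_bd _) _; rewrite ler_wpM2l ?enorm_sub_proj_le.
apply: le_trans (enorm_rank1_le _ _ v_neq0) _.
by rewrite ler_wpM2r ?enorm_ge0 // ler_pdivrMr.
Qed.

End Euclidean.

Section Jacobian.
Variables (R : realType) (p : nat) (G : 'cV[R]_p -> 'cV[R]_p).

Lemma diff_jacE z h : 'd G z h = jac G z *m h.
Proof.
apply/matrixP => i j; rewrite (ord1 j) {1}(matrix_sum_delta h) linear_sum summxE.
rewrite !mxE; apply: eq_bigr => k _.
by rewrite linear_sum summxE big_ord1 linearZ !mxE mulrC (ord1 (0 : 'I_1)).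
Qed.

Lemma jac_mvt_coord (x h : 'cV[R]_p) (i : 'I_p) :
  (forall t : R, 0 <= t <= 1 -> differentiable G (t *: h + x)) ->
  exists2 t : R, 0 <= t <= 1 & (G (h + x) - G x) i 0 = (jac G (t *: h + x) *m h) i 0.
Proof.
move=> G_diff.
have @f : {linear 'cV[R]_p -> R}.
  by exists (fun N : 'cV[R]_p => N i 0); do 2![eexists]; do ?[constructor];
     rewrite ?mxE// => ? *; rewrite ?mxE//; move=> ?; rewrite !mxE.
have f_cont : continuous f by exact: coord_continuous.
pose l : R -> 'cV[R]_p := (fun t : R => t *: h) + cst x.
pose g := f \o (G \o l).
pose dg (t : R) := ('d G (t *: h + x) h) i 0.
have g_diff (t : R) : 0 <= t <= 1 ->
    is_diff t g (f \o ('d G (t *: h + x) \o ((fun s : R => s *: h) + 0))).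
  move=> t01.
  have l_diff : is_diff t l ((fun s : R => s *: h) + 0) by apply: is_diffD.
  have G_diff_l : is_diff (l t) G ('d G (l t)) by apply: differentiableP; apply: G_diff.
  have f_diff : is_diff (G (l t)) f f.
    by apply: DiffDef; [exact/linear_differentiable | exact: diff_lin].
  by apply: is_diff_comp; apply: is_diff_comp.
have g_derive (t : R) : t \in `]0, 1[%R -> is_derive t 1 g (dg t).
  rewrite in_itv /= => /andP[t_gt0 t_lt1].
  have t01 : 0 <= t <= 1 by rewrite !ltW.
  have g_diff_t := g_diff t t01.
  have -> : dg t = 'D_1 g t.
    rewrite deriveE; last exact: ex_diff.
    by rewrite diff_val /= /dg; congr (('d G _ _) i 0); rewrite /GRing.add /= addr0 scale1r.
  by apply: derivableP; apply: diff_derivable; exact: ex_diff.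
have g_cont : {within `[0, 1], continuous g}.
  apply/continuous_in_subspaceT => t; rewrite inE /= in_itv /= => t01.
  have g_diff_t := g_diff t t01.
  exact: differentiable_continuous ex_diff.
have [c c01 gc] := MVT_segment ler01 g_derive g_cont.
exists c; first by move: c01; rewrite in_itv.
have l1 : l 1 = h + x by rewrite /l /GRing.add /= scale1r.
have l0 : l 0 = x by rewrite /l /GRing.add /= scale0r add0r.
by move: gc; rewrite /g /dg /= subr0 mulr1 l1 l0 -diff_jacE => <-; rewrite !mxE.
Qed.

End Jacobian.

Section NormConstants.
Variables (R : realType) (p : nat) (nv : 'cV[R]_p -> R) (c1 c2 : R).
Hypotheses (nvP : is_vnorm nv) (c1_gt0 : 0 < c1) (c2_gt0 : 0 < c2)
  (mxn_le : forall x, `|x| <= c1 * nv x) (nv_le : forall x, nv x <= c2 * `|x|).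

Implicit Types (x y xs : 'cV[R]_p) (A : 'M[R]_p).

Definition nv_en_factor := c2 * ((1 + p%:R) * c1).

Lemma nv_en_factor_ge0 : 0 <= nv_en_factor.
Proof. by rewrite /nv_en_factor !mulr_ge0 ?addr_ge0 // ltW. Qed.

Lemma nv_le_enorm x : nv x <= c2 * enorm x.
Proof. by apply: le_trans (nv_le x) _; rewrite ler_wpM2l ?mx_norm_le_enorm // ltW. Qed.

Lemma enorm_le_nv x : enorm x <= (1 + p%:R) * c1 * nv x.
Proof.
apply: le_trans (enorm_le_mx_norm x) _.
by rewrite -mulrA ler_wpM2l ?addr_ge0 ?mxn_le.
Qed.

Lemma nv_mulmx_le_en_bounded A e y : 0 <= e -> en_bounded A e ->
  nv (A *m y) <= nv_en_factor * e * nv y.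
Proof.
move=> e_ge0 A_bd; apply: le_trans (nv_le_enorm _) _.
apply: le_trans (ler_wpM2l (ltW c2_gt0) (A_bd y)) _.
apply: le_trans (ler_wpM2l (ltW c2_gt0) (ler_wpM2l e_ge0 (enorm_le_nv y))) _.
by rewrite /nv_en_factor le_eqVlt; apply/orP; left; apply/eqP; ring.
Qed.

Definition nv_mxbound (A : 'M[R]_p) := nv_en_factor * frob A + 1.

Lemma nv_mxbound_gt0 A : 0 < nv_mxbound A.
Proof. by have := mulr_ge0 nv_en_factor_ge0 (frob_ge0 A); rewrite /nv_mxbound; lra. Qed.

Lemma nv_mulmx_le A y : nv (A *m y) <= nv_mxbound A * nv y.
Proof.
apply: le_trans (nv_mulmx_le_en_bounded y (frob_ge0 A) (en_bounded_frob A)) _.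
by rewrite ler_wpM2r ?nv_ge0 // lerDl.
Qed.

Lemma nbhs_nv_ball xs (A : set 'cV[R]_p) :
  nbhs xs A -> exists2 r, 0 < r & forall x, nv (x - xs) <= r -> A x.
Proof.
move/nbhs_normP => [e e_gt0 xsA]; exists (e / (2 * c1)); first by rewrite divr_gt0 ?mulr_gt0.
move=> x x_near; apply: xsA => /=; rewrite -normrN opprB.
apply: le_lt_trans (mxn_le _) _; apply: le_lt_trans (ler_wpM2l (ltW c1_gt0) x_near) _.
have -> : c1 * (e / (2 * c1)) = e / 2 by field; rewrite gt_eqF.
by rewrite ltr_pdivrMr // ltr_pMr // ltr1n.
Qed.

Lemma nv_ball_nbhs xs r : 0 < r -> nbhs xs [set x | nv (x - xs) < r].
Proof.
move=> r_gt0; rewrite -nbhs_nbhs_norm; exists (r / c2); first exact: divr_gt0.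
move=> y /= y_near; apply: le_lt_trans (nv_le _) _.
by rewrite -normrN opprB mulrC -ltr_pdivlMr.
Qed.

Lemma nv_ball_nbhs_fst (Y : topologicalType) xs (y : Y) r :
  0 < r -> nbhs (xs, y) [set xy | nv (xy.1 - xs) < r].
Proof.
move=> r_gt0; exists ([set x | nv (x - xs) < r], setT); last by move=> [x z] [].
by split => /=; [exact: nv_ball_nbhs | exact: filterT].
Qed.

Lemma nv_ball_convex xs x y r t :
  nv (x - xs) <= r -> nv (y - xs) <= r -> 0 <= t <= 1 -> nv (t *: (y - x) + x - xs) <= r.
Proof.
move=> x_near y_near /andP[t_ge0 t_le1].
have -> : t *: (y - x) + x - xs = t *: (y - xs) + (1 - t) *: (x - xs).
  by apply/matrixP => i j; rewrite !mxE; ring.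
apply: le_trans (nvD nvP _ _) _; rewrite !(nvZ nvP) !ger0_norm ?subr_ge0 //.
have t1_ge0 : 0 <= 1 - t by rewrite subr_ge0.
by have := ler_wpM2l t_ge0 y_near; have := ler_wpM2l t1_ge0 x_near; lra.
Qed.

Hypothesis p_gt0 : (0 < p)%N.

Lemma opnorm_mulmx_le (A : 'M[R]_p) y : nv (A *m y) <= opnorm nv A * nv y.
Proof.
set S := [set nv (A *m x) | x in [set x | nv x = 1]].
have S_sup : has_sup S.
  split; last first.
    exists (nv_en_factor * frob A) => _ [x x1 <-].
    by have := nv_mulmx_le_en_bounded x (frob_ge0 A) (en_bounded_frob A); rewrite x1 mulr1.
  pose z : 'cV[R]_p := const_mx 1.
  have z_neq0 : z != 0.
    apply/eqP => /matrixP /(_ (Ordinal p_gt0) 0); rewrite !mxE => /eqP.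
    by rewrite oner_eq0.
  have z_gt0 := nv_gt0 nvP z_neq0.
  exists (nv (A *m ((nv z)^-1 *: z))); exists ((nv z)^-1 *: z) => //=.
  by rewrite (nvZ nvP) ger0_norm ?invr_ge0 ?nv_ge0 // mulVf // gt_eqF.
have [->|y_neq0] := eqVneq y 0; first by rewrite mulmx0 (nv0 nvP) mulr0.
have y_gt0 := nv_gt0 nvP y_neq0.
have Sy : S (nv (A *m ((nv y)^-1 *: y))).
  exists ((nv y)^-1 *: y) => //=.
  by rewrite (nvZ nvP) ger0_norm ?invr_ge0 ?nv_ge0 // mulVf // gt_eqF.
have := sup_upper_bound S_sup Sy.
rewrite -scalemxAr (nvZ nvP) ger0_norm ?invr_ge0 ?nv_ge0 //.
by rewrite ler_pdivrMl // mulrC.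
Qed.

Lemma holder_jac_linear_approx (G : 'cV[R]_p -> 'cV[R]_p) xs (D : set 'cV[R]_p) (d K : R) :
  open D -> D xs -> (forall x, D x -> differentiable G x) -> 0 < d ->
  (forall x, D x -> opnorm nv (jac G x - jac G xs) <= K * nv (x - xs) `^ d) ->
  exists2 rD, 0 < rD & forall r x y, r <= rD -> nv (x - xs) <= r -> nv (y - xs) <= r ->
     nv (G y - G x - jac G xs *m (y - x)) <= c2 * (c1 * `|K|) * r `^ d * nv (y - x).
Proof.
move=> D_open D_xs G_diff d_gt0 jac_holder.
have [rD rD_gt0 rD_D] : exists2 r, 0 < r & forall x, nv (x - xs) <= r -> D x.
  by apply: nbhs_nv_ball; apply: open_nbhs_nbhs.
exists rD => // r x y r_le x_near y_near.
set h := y - x.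
suff coord_le i : `|(G y - G x - jac G xs *m h) i 0| <= c1 * `|K| * r `^ d * nv h.
  apply: le_trans (nv_le _) _; rewrite -!mulrA ler_wpM2l ?(ltW c2_gt0) // !mulrA.
  apply: mx_norm_le => [|i j]; last by rewrite ord1 coord_le.
  by rewrite !mulr_ge0 ?nv_ge0 ?powR_ge0 // ltW.
have G_diff_seg t : 0 <= t <= 1 -> differentiable G (t *: h + x).
  by move=> t01; apply/G_diff/rD_D/(le_trans _ r_le)/nv_ball_convex.
have [t t01] := jac_mvt_coord i G_diff_seg; rewrite /h subrK => Gyx.
set z := t *: (y - x) + x.
have z_near : nv (z - xs) <= r by apply: nv_ball_convex.
have -> : (G y - G x - jac G xs *m h) i 0 = ((jac G z - jac G xs) *m h) i 0.
  by rewrite [LHS]mxE Gyx mulmxBl [RHS]mxE !mxE.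
apply: le_trans (mx_norm_entry_le _ _ _) _; apply: le_trans (mxn_le _) _.
rewrite -!mulrA ler_wpM2l ?(ltW c1_gt0) // mulrA.
apply: le_trans (opnorm_mulmx_le _ _) _; rewrite ler_wpM2r ?nv_ge0 //.
apply: le_trans (jac_holder _ (rD_D _ (le_trans z_near r_le))) _.
apply: le_trans (ler_norm _) _; rewrite normrM (ger0_norm (powR_ge0 _ _)) ler_wpM2l //.
by rewrite (ge0_ler_powR (ltW d_gt0)) ?nnegrE ?(le_trans (nv_ge0 nvP _) z_near) ?nv_ge0.
Qed.

End NormConstants.

Section LocalConvergence.
Variables (R : realType) (p : nat) (nv : 'cV[R]_p -> R) (F : 'cV[R]_p -> 'cV[R]_p)
  (xs : 'cV[R]_p) (J Ji : 'M[R]_p) (c1 c2 L d r0 tau : R).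
Local Notation cJ := (nv_mxbound c1 c2 J).
Local Notation cJi := (nv_mxbound c1 c2 Ji).
Local Notation kp := (nv_en_factor p c1 c2).
Hypotheses (nvP : is_vnorm nv) (c1_gt0 : 0 < c1) (c2_gt0 : 0 < c2)
  (mxn_le : forall x, `|x| <= c1 * nv x) (nv_le : forall x, nv x <= c2 * `|x|)
  (JiJ : Ji *m J = 1%:M) (L_ge0 : 0 <= L) (d_gt0 : 0 < d) (r0_gt0 : 0 < r0)
  (resid_approx : forall r x y, r <= r0 -> nv (x - xs) <= r -> nv (y - xs) <= r ->
     nv (resid F y - resid F x - J *m (y - x)) <= L * r `^ d * nv (y - x))
  (tau_lt1 : tau < 1)
  (F_contr : forall x, nv (x - xs) <= r0 -> nv (F x - xs) <= tau * nv (x - xs))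
  (resid_xs : resid F xs = 0)
  (small_Ji : L * r0 `^ d <= (4 * cJi)^-1) (small_J : L * r0 `^ d <= cJ).

Let kp_ge0 : 0 <= kp := nv_en_factor_ge0 p c1_gt0 c2_gt0.
Let cJ_gt0 : 0 < cJ := nv_mxbound_gt0 c1_gt0 c2_gt0 J.
Let cJi_gt0 : 0 < cJi := nv_mxbound_gt0 c1_gt0 c2_gt0 Ji.
Let nv_J_le y : nv (J *m y) <= cJ * nv y := nv_mulmx_le nvP c2_gt0 mxn_le nv_le J y.
Let nv_Ji_le y : nv (Ji *m y) <= cJi * nv y := nv_mulmx_le nvP c2_gt0 mxn_le nv_le Ji y.

Lemma powR_nv_le x : nv (x - xs) <= r0 -> nv (x - xs) `^ d <= r0 `^ d.
Proof.
move=> x_near; rewrite ge0_ler_powR ?nnegrE ?nv_ge0 //; first exact: ltW.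
exact: le_trans (nv_ge0 nvP _) x_near.
Qed.

Lemma small_Ji_le x : nv (x - xs) <= r0 -> cJi * (L * nv (x - xs) `^ d) <= 4^-1.
Proof.
move=> x_near; rewrite mulrC -ler_pdivlMr // -invfM.
exact: le_trans (ler_wpM2l L_ge0 (powR_nv_le x_near)) small_Ji.
Qed.

Lemma nv_F_le x : nv (x - xs) <= r0 -> nv (F x - xs) <= nv (x - xs).
Proof.
by move=> x_near; apply: le_trans (F_contr x_near) (ler_piMl (nv_ge0 nvP _) (ltW tau_lt1)).
Qed.

Lemma nv_vvec_sub_le x : nv (x - xs) <= r0 ->
  nv (vvec F x - J *m uvec F x) <= L * nv (x - xs) `^ d * nv (uvec F x).
Proof. by move=> x_near; apply: resid_approx x_near (lexx _) (nv_F_le x_near). Qed.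

Lemma nv_uvec_le x : nv (x - xs) <= r0 -> nv (uvec F x) <= 2 * cJi * nv (vvec F x).
Proof.
move=> x_near; set u := uvec F x; set v := vvec F x.
have Ju_le : nv (J *m u) <= nv v + L * nv (x - xs) `^ d * nv u.
  have := nvD nvP v (J *m u - v); rewrite addrC subrK (nv_distC nvP (J *m u)) => /le_trans; apply.
  by rewrite lerD2l; apply: nv_vvec_sub_le.
have u_le : nv u <= cJi * nv (J *m u) by have := nv_Ji_le (J *m u); rewrite mulmxA JiJ mul1mx.
have := ler_wpM2l (ltW cJi_gt0) Ju_le; have := small_Ji_le x_near.
have := nv_ge0 nvP u; have := nv_ge0 nvP v; nra.
Qed.

Lemma uvec_neq0 x : nv (x - xs) <= r0 -> x != xs -> uvec F x != 0.
Proof.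
move=> x_near; apply: contra_neq; rewrite /uvec => /eqP; rewrite subr_eq0 => /eqP Fx.
apply/eqP; rewrite -subr_eq0; apply/eqP/(nv_eq0 nvP)/le_anti; rewrite (nv_ge0 nvP) andbT.
have := F_contr x_near; rewrite Fx -subr_le0 -{1}[nv _]mul1r -mulrBl.
by rewrite pmulr_rle0 // subr_gt0.
Qed.

Lemma vvec_neq0 x : nv (x - xs) <= r0 -> x != xs -> vvec F x != 0.
Proof.
move=> x_near x_neq; apply: contra_neq (uvec_neq0 x_near x_neq) => v0.
apply/(nv_eq0 nvP)/le_anti; rewrite (nv_ge0 nvP) andbT.
by have := nv_uvec_le x_near; rewrite v0 (nv0 nvP) mulr0.
Qed.

Definition eta_max := (8 * (kp + 1) * cJ)^-1.

Lemma eta_max_gt0 : 0 < eta_max.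
Proof. by rewrite invr_gt0 !mulr_gt0 // ltr_wpDl ?kp_ge0. Qed.

Lemma kp_eta_le eta : 0 <= eta -> eta <= eta_max -> kp * eta * (2 * cJ) <= 4^-1.
Proof.
move=> eta_ge0 eta_le; have kp1_gt0 : 0 < kp + 1 by rewrite ltr_wpDl.
have : kp * eta <= (kp + 1) * eta_max by rewrite ler_pM // lerDl.
move=> /(ler_wpM2r (mulr_ge0 (ler0n _ 2) (ltW cJ_gt0))) /le_trans; apply.
by rewrite /eta_max le_eqVlt; apply/orP; left; apply/eqP; field; rewrite !gt_eqF.
Qed.

Lemma nv_xbar_le x H eta : 0 <= eta <= eta_max -> en_bounded (H - Ji) eta ->
  nv (x - xs) <= r0 -> nv (xbar F x H - xs) <= nv (x - xs) / 2.
Proof.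
move=> /andP[eta_ge0 eta_le] H_bd x_near; set rho := nv (x - xs).
have rho_ge0 : 0 <= rho by apply: nv_ge0.
set g := resid F x - J *m (x - xs).
have g_le : nv g <= L * rho `^ d * rho.
  have xs_near : nv (xs - xs) <= rho by rewrite subrr (nv0 nvP).
  by have := resid_approx x_near xs_near (lexx _); rewrite resid_xs subr0.
have xbarE : xbar F x H - xs = - (Ji *m g + (H - Ji) *m resid F x).
  rewrite /xbar /g (mulmxBr Ji) mulmxA JiJ mul1mx mulmxBl.
  by apply/matrixP => i j; rewrite !mxE; ring.
have resid_le : nv (resid F x) <= 2 * cJ * rho.
  have -> : resid F x = J *m (x - xs) + g by rewrite /g addrC subrK.
  apply: le_trans (nvD nvP _ _) _; have := nv_J_le (x - xs); rewrite -/rho.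
  have : L * rho `^ d * rho <= cJ * rho.
    by rewrite ler_wpM2r // (le_trans _ small_J) // ler_wpM2l ?powR_nv_le.
  lra.
have Jig_le : nv (Ji *m g) <= 4^-1 * rho.
  apply: le_trans (nv_Ji_le g) _; apply: le_trans (ler_wpM2l (ltW cJi_gt0) g_le) _.
  by rewrite !mulrA ler_wpM2r // -mulrA; apply: small_Ji_le.
have Hres_le : nv ((H - Ji) *m resid F x) <= 4^-1 * rho.
  apply: le_trans (nv_mulmx_le_en_bounded c2_gt0 mxn_le nv_le _ eta_ge0 H_bd) _.
  apply: le_trans (ler_wpM2l (mulr_ge0 kp_ge0 eta_ge0) resid_le) _.
  by have := ler_wpM2r rho_ge0 (kp_eta_le eta_ge0 eta_le); rewrite !mulrA.
by rewrite xbarE (nvN nvP); apply: le_trans (nvD nvP _ _) _; lra.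
Qed.

Definition deteriorC := (1 + p%:R) * c1 * (2 * cJi * cJi * L) * c2.

Lemma deteriorC_ge0 : 0 <= deteriorC.
Proof.
by rewrite /deteriorC !mulr_ge0 ?(ltW cJi_gt0) ?addr_ge0 ?ler01 ?ler0n ?(ltW c1_gt0) ?(ltW c2_gt0).
Qed.

Lemma en_bounded_Hbar x H eta : 0 <= eta -> en_bounded (H - Ji) eta ->
  nv (x - xs) <= r0 -> en_bounded (Hbar F x H - Ji) (eta + deteriorC * nv (x - xs) `^ d).
Proof.
move=> eta_ge0 H_bd x_near; have [x_xs|x_neq] := eqVneq x xs.
  have Fxs : F xs = xs by apply/eqP; rewrite -subr_eq0; apply/eqP.
  have v0 : vvec F xs = 0 by rewrite /vvec Fxs subrr.
  have -> : Hbar F x H = H by rewrite /Hbar /= x_xs v0 trmx0 !mulmx0 !scaler0 subr0 addr0.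
  by apply: en_bounded_le H_bd; rewrite lerDl mulr_ge0 ?deteriorC_ge0 ?powR_ge0.
apply: en_bounded_rank1_update => //; first exact: vvec_neq0.
set u := uvec F x; set v := vvec F x; set rho := nv (x - xs).
have -> : u - Ji *m v = - (Ji *m (v - J *m u)).
  by rewrite [in RHS](mulmxBr Ji) mulmxA JiJ mul1mx opprB.
rewrite enormN; apply: le_trans (enorm_le_nv mxn_le _) _.
have Lrho_ge0 : 0 <= L * rho `^ d by rewrite mulr_ge0 ?powR_ge0.
have w_le : nv (Ji *m (v - J *m u)) <= cJi * (L * rho `^ d * (2 * cJi * (c2 * enorm v))).
  apply: le_trans (nv_Ji_le _) _; rewrite ler_wpM2l ?(ltW cJi_gt0) //.
  apply: le_trans (nv_vvec_sub_le x_near) _; rewrite ler_wpM2l //.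
  apply: le_trans (nv_uvec_le x_near) _; rewrite ler_wpM2l ?mulr_ge0 ?(ltW cJi_gt0) //.
  exact: nv_le_enorm.
have -> : deteriorC * rho `^ d * enorm v =
    (1 + p%:R) * c1 * (cJi * (L * rho `^ d * (2 * cJi * (c2 * enorm v))))
  by rewrite /deteriorC; ring.
by rewrite ler_wpM2l ?mulr_ge0 ?addr_ge0 ?(ltW c1_gt0).
Qed.

Lemma half_powR_lt1 : 2^-1 `^ d < 1 :> R.
Proof.
have one_pow : 1 `^ d = 1 :> R by rewrite powR1.
by rewrite -[ltRHS]one_pow gt0_ltr_powR ?nnegrE ?invr_ge0 // invf_lt1 // ltr1n.
Qed.

Definition lyap eta x := eta + deteriorC / (1 - 2^-1 `^ d) * nv (x - xs) `^ d.

Definition admissible x H eta :=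
  [/\ 0 <= eta, en_bounded (H - Ji) eta, nv (x - xs) <= r0 & lyap eta x <= eta_max].

Lemma lyap_coef_ge0 : 0 <= deteriorC / (1 - 2^-1 `^ d).
Proof. by rewrite divr_ge0 ?deteriorC_ge0 // subr_ge0 ltW // half_powR_lt1. Qed.

Lemma admissible_xbar_le x H eta :
  admissible x H eta -> nv (xbar F x H - xs) <= nv (x - xs) / 2.
Proof.
case=> eta_ge0 H_bd x_near lyap_le; apply: nv_xbar_le => //.
rewrite eta_ge0 (le_trans _ lyap_le) // lerDl mulr_ge0 ?lyap_coef_ge0 ?powR_ge0 //.
Qed.

Lemma admissible_step x H eta : admissible x H eta ->
  admissible (xbar F x H) (Hbar F x H) (eta + deteriorC * nv (x - xs) `^ d).
Proof.
move=> adm; have xbar_le := admissible_xbar_le adm.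
case: adm => eta_ge0 H_bd x_near lyap_le; set rho := nv (x - xs) in xbar_le x_near lyap_le *.
have rho_ge0 : 0 <= rho by apply: nv_ge0.
split.
- by rewrite addr_ge0 // mulr_ge0 ?deteriorC_ge0 ?powR_ge0.
- exact: en_bounded_Hbar.
- by apply: le_trans xbar_le _; apply: le_trans x_near; lra.
apply: le_trans lyap_le; rewrite /lyap -addrA lerD2l.
have pow_le : nv (xbar F x H - xs) `^ d <= rho `^ d * 2^-1 `^ d.
  rewrite -powRM ?invr_ge0 // ge0_ler_powR ?nnegrE ?nv_ge0 ?mulr_ge0 ?invr_ge0 //.
  exact: ltW.
apply: le_trans (lerD (lexx _) (ler_wpM2l lyap_coef_ge0 pow_le)) _.
have beta_neq1 : 1 - 2^-1 `^ d != 0 :> R by rewrite subr_eq0 eq_sym lt_eqF ?half_powR_lt1.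
by rewrite le_eqVlt; apply/orP; left; apply/eqP; field.
Qed.

Lemma admissible_iterQN x0 H0 eta : admissible x0 H0 eta ->
  forall k, exists eta', admissible (iterQN F x0 H0 k).1 (iterQN F x0 H0 k).2 eta'.
Proof.
move=> adm; elim=> [|k [eta' adm']]; first by exists eta.
by eexists; apply: admissible_step adm'.
Qed.

Lemma admissible_init : exists2 eps, 0 < eps & forall x0 H0 eta,
  nv (x0 - xs) < eps -> 0 <= eta <= eta_max / 2 -> en_bounded (H0 - Ji) eta ->
  admissible x0 H0 eta.
Proof.
have [eps eps_gt0 [eps_le pow_le]] := exists_small_radius d_gt0 lyap_coef_ge0
  (divr_gt0 eta_max_gt0 (ltr0n _ 2)) r0_gt0.
exists eps => // x0 H0 eta x0_near /andP[eta_ge0 eta_le] H_bd.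
have x0_le : nv (x0 - xs) <= eps by apply: ltW.
split => //; first exact: le_trans eps_le.
rewrite /lyap (splitr eta_max); apply: lerD eta_le (le_trans _ pow_le).
rewrite ler_wpM2l ?lyap_coef_ge0 // ge0_ler_powR ?nnegrE ?nv_ge0 //; first exact: ltW.
exact: le_trans (nv_ge0 nvP _) x0_le.
Qed.

Lemma iterQN_local_cvg :
  (forall x, nv (x - xs) <= r0 -> x != xs -> vvec F x != 0) /\
  exists eps eta0 : R, [/\ 0 < eps, 0 < eta0 & forall x0 H0 eta,
    nv (x0 - xs) < eps -> 0 <= eta <= eta0 -> en_bounded (H0 - Ji) eta ->
    (forall k, nv ((iterQN F x0 H0 k).1 - xs) <= r0) /\
    (fun k => nv ((iterQN F x0 H0 k).1 - xs)) @ \oo --> (0 : R)].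
Proof.
split; first exact: vvec_neq0.
have [eps eps_gt0 init] := admissible_init.
exists eps, (eta_max / 2); split; rewrite ?divr_gt0 ?eta_max_gt0 //.
move=> x0 H0 eta x0_near eta_le H_bd.
have adm := admissible_iterQN (init _ _ _ x0_near eta_le H_bd).
split=> [k|]; first by have [? []] := adm k.
apply: halving_cvg0 => [k|k]; first exact: nv_ge0.
by have [eta' adm'] := adm k; apply: admissible_xbar_le adm'.
Qed.

End LocalConvergence.

Unset Implicit Arguments.
Theorem theorem2 (R : realType) (p : nat) (p_ge1 : (1 <= p)%N)
  (nv : 'cV[R]_p -> R) (F : 'cV[R]_p -> 'cV[R]_p) (xs : 'cV[R]_p)
  (D : set 'cV[R]_p) (d K mu2 : R) (M : 'M[R]_p)
  (N' : set ('cV[R]_p * 'M[R]_p)) :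
  is_vnorm nv ->
  (* standing assumption: F is locally linearly convergent to xs *)
  (exists S : set 'cV[R]_p, exists tau : R,
     [/\ nbhs xs S, 0 < tau, tau < 1 &
         forall x, S x -> nv (F x - xs) <= tau * nv (x - xs)]) ->
  (* (A1) *)
  open D -> convex_set (D : set (convex_lmodType 'cV[R]_p)) -> D xs ->
  (forall x, D x -> differentiable (resid F) (x : 'cV[R]_p)) ->
  resid F xs = 0 ->
  jac (resid F) xs \in unitmx ->
  0 < d ->
  (forall x, D x ->
     opnorm nv (jac (resid F) x - jac (resid F) xs) <= K * nv (x - xs) `^ d) ->
  (* condition on M *)
  0 <= mu2 -> M^T = M -> M \in unitmx ->
  nbhs ((xs, invmx (jac (resid F) xs)) : 'cV[R]_p * 'M[R]_p) N' ->
  (forall x H, N' (x, H) -> vvec F x != 0 ->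
     nv (M *m vvec F x - invmx M *m vvec F x) / nv (invmx M *m vvec F x)
       <= mu2 * nv (vvec F x) `^ d) ->
  (* conclusion *)
  (exists N : set ('cV[R]_p * 'M[R]_p),
     nbhs ((xs, invmx (jac (resid F) xs)) : 'cV[R]_p * 'M[R]_p) N /\
     forall x H, N (x, H) -> x != xs -> vvec F x != 0)
  /\
  (exists eps delta : R, [/\ 0 < eps, 0 < delta &
     forall (x0 : 'cV[R]_p) (H0 : 'M[R]_p),
       nv (x0 - xs) < eps ->
       Mnorm M (H0 - invmx (jac (resid F) xs)) < delta ->
       (forall k, (iterQN F x0 H0 k).1 != xs -> vvec F (iterQN F x0 H0 k).1 != 0) /\
       (fun k => nv ((iterQN F x0 H0 k).1 - xs)) @ \oo --> (0 : R)]).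
Proof.
move=> nvP [S [tau [S_nbhs _ tau_lt1 F_contr]]] D_open _ D_xs G_diff G_xs J_unit d_gt0
  jac_holder _ _ M_unit _ _.
have [c1 c1_gt0 mxn_le] := mx_norm_le_nv nvP p_ge1.
have [c2 c2_gt0 nv_le] := nv_le_mx_norm nvP.
set J := jac (resid F) xs; set Ji := invmx J.
have [rD rD_gt0 approx] := holder_jac_linear_approx nvP c1_gt0 c2_gt0 mxn_le nv_le p_ge1
  D_open D_xs G_diff d_gt0 jac_holder.
have [rS rS_gt0 near_S] := nbhs_nv_ball c1_gt0 mxn_le S_nbhs.
have L_ge0 : 0 <= c2 * (c1 * `|K|) by rewrite !mulr_ge0 // ltW.
have bound_gt0 : 0 < Num.min (4 * nv_mxbound c1 c2 Ji)^-1 (nv_mxbound c1 c2 J).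
  by rewrite lt_min invr_gt0 mulr_gt0 ?nv_mxbound_gt0.
have rDS_gt0 : 0 < Num.min rD rS by rewrite lt_min rD_gt0.
have [r0 r0_gt0 []] := exists_small_radius d_gt0 L_ge0 bound_gt0 rDS_gt0.
rewrite !le_min => /andP[r0D r0S] /andP[small_Ji small_J].
have [vvec_neq0 [eps [eta0 [eps_gt0 eta0_gt0 iter_cvg]]]] :=
  iterQN_local_cvg nvP c1_gt0 c2_gt0 mxn_le nv_le (mulVmx J_unit) L_ge0 d_gt0 r0_gt0
    (fun r x y r_le => approx r x y (le_trans r_le r0D)) tau_lt1
    (fun x x_near => F_contr x (near_S x (le_trans x_near r0S))) G_xs small_Ji small_J.
split.
  exists [set xH | nv (xH.1 - xs) < r0]; split.
    by apply: filterS (nv_ball_nbhs_fst c2_gt0 nv_le xs Ji r0_gt0).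
  by move=> x H /= /ltW; apply: vvec_neq0.
have [delta delta_gt0 Mnorm_small] := en_bounded_Mnorm_small M_unit eta0_gt0.
exists eps, delta; split => // x0 H0 x0_near /Mnorm_small [eta eta_le H0_bd].
have [iter_near iter_cvg0] := iter_cvg x0 H0 eta x0_near eta_le H0_bd.
by split=> // k; apply: vvec_neq0.
Qed.
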